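(* Let $\Gamma$ be a gain operator on $\ell^\infty_+(\mathcal I)$ with $|\mathcal I|<\infty$ whose interconnection graph $\mathcal G$ is strongly connected. The following are equivalent: (a) there exists a path of strict decay for $\Gamma$; (b) there exists $\rho\in\mathcal K_\infty$ such that $\Gamma_\rho$ satisfies the NJI condition.
   Context: Let $\mathcal I$ be a nonempty countable index set; $\ell^\infty_+(\mathcal I)$ is the cone of nonnegative real families $s=(s_i)_{i\in\mathcal I}$ with $\|s\|:=\sup_i|s_i|<\infty$, ordered componentwise; $s>0$ means $s\ge0$, $s\ne0$; $\mathbf 1$ is the all-ones vector. $\mathcal K_\infty$: continuous strictly increasing unbounded $\gamma:\mathbb R_+\to\mathbb R_+$ with $\gamma(0)=0$, acting componentwise. For $\mathcal J\subset\mathcal I$, $s_{|\mathcal J}$ agrees with $s$ on $\mathcal J$ and is $0$ elsewhere. Gain operator: for each $i$ a finite (possibly empty) $\mathcal I_i\subset\mathcal I\setminus\{i\}$; directed graph $\mathcal G$ with vertices $\mathcal I$ and edges $ji$, $j\in\mathcal I_i$; a pointwise equicontinuous family $\gamma_{ij}\in\mathcal K_\infty$ ($ji\in E(\mathcal G)$); functions $\mu_i:\ell^\infty_+(\mathcal I)\to[0,\infty]$ with (M1) some $\xi\in\mathcal K_\infty$ has $\mu_i(0)=0$, $\mu_i(s)\ge\xi(\|s\|)$; (M2) $\mu_i$ monotone; (M3) for each finite $\mathcal J$, $\mu_i$ restricted to vectors vanishing off $\mathcal J$ is finite-valued and continuous; (M4) for each norm-bounded $A$ and $\varepsilon>0$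 there is $\delta>0$ with $\sup_i|\mu_i(s_{|\mathcal I_i})-\mu_i(s^0_{|\mathcal I_i})|\le\varepsilon$ whenever $s^0\in A$, $\|s-s^0\|\le\delta$. $\Gamma_i(s):=\mu_i([\gamma_{ij}(s_j)]_{j\in\mathcal I_i})$ (argument zero outside $\mathcal I_i$). $\Gamma_\rho:=(\mathrm{id}+\rho)\circ\Gamma$. $\mathcal G$ is strongly connected if for all $i,j$ there is a directed path from $i$ to $j$. $T$ satisfies the NJI condition if $T(s)\ge s$ fails for every $s>0$. A path of strict decay for $\Gamma$ is a map $\sigma:\mathbb R_+\to\ell^\infty_+(\mathcal I)$ such that: (i) for some $\rho\in\mathcal K_\infty$, $\Gamma_\rho(\sigma(r))\le\sigma(r)$ for all $r\ge0$; (ii) $\varphi_{\min}(r)\mathbf 1\le\sigma(r)\le\varphi_{\max}(r)\mathbf 1$ for some $\varphi_{\min},\varphi_{\max}\in\mathcal K_\infty$; (iii) each $\sigma_i\in\mathcal K_\infty$; (iv) for each compact $K\subset(0,\infty)$ there are $0<l\le L$ with $l|r_1-r_2|\le|\sigma_i^{-1}(r_1)-\sigma_i^{-1}(r_2)|\le L|r_1-r_2|$ for all $r_1,r_2\in K$, $i\in\mathcal I$. *)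

From HB Require Import structures.
From mathcomp Require Import all_boot all_order all_algebra.
From mathcomp Require Import all_classical all_reals.
From mathcomp Require Import topology normedtype.
Set Implicit Arguments. Unset Strict Implicit. Unset Printing Implicit Defensive.
Import Order.TTheory GRing.Theory Num.Theory.
Import numFieldNormedType.Exports.
Local Open Scope ring_scope.
Local Open Scope classical_set_scope.

Section Defs.
Variables (R : realType) (I : finType).

(* elements of l^oo_+(I): nonnegative families (bounded automatically, I finite) *)
Definition nonneg (s : I -> R) : Prop := forall i, 0 <= s i.

Definition supnorm (s : I -> R) : R := \big[Num.max/0]_(i : I) `|s i|.

Definition vle (s t : I -> R) : Prop := forall i, s i <= t i.

Definition vpos (s : I -> R) : Prop := nonneg s /\ s <> (fun _ => 0).

Definition restr (J : {set I}) (s : I -> R) : I -> R :=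
  fun j => if j \in J then s j else 0.

(* class K_infty, for functions R_+ -> R_+ (only values on [0,oo) matter) *)
Definition Kinf (g : R -> R) : Prop :=
  [/\ g 0 = 0,
      (forall x y, 0 <= x -> x < y -> g x < g y),
      (forall x, 0 <= x -> forall e, 0 < e -> exists2 d, 0 < d &
          forall y, 0 <= y -> `|x - y| < d -> `|g x - g y| < e) &
      (forall M, exists2 x, 0 <= x & M <= g x)].

(* Gain operator data: Ii i (finite subset of I \ {i}), gains gamma i j,
   and functions mu i : l^oo_+ -> [0,oo]. *)
Definition is_gain_operator (Ii : I -> {set I}) (gamma : I -> I -> R -> R)
    (mu : I -> (I -> R) -> \bar R) : Prop :=
  (forall i, i \notin Ii i) /\
      (forall i j, j \in Ii i -> Kinf (gamma i j)) /\
      (forall r, 0 <= r -> forall e, 0 < e -> exists2 d, 0 < d &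
          forall i j, j \in Ii i -> forall r', 0 <= r' -> `|r - r'| < d ->
            `|gamma i j r - gamma i j r'| < e) /\
      (exists xi, Kinf xi /\ forall i, mu i (fun _ => 0) = 0%E /\
          forall s, nonneg s -> ((xi (supnorm s))%:E <= mu i s)%E) /\
      (forall i s, nonneg s -> (0 <= mu i s)%E) /\
      (forall i s t, nonneg s -> nonneg t -> vle s t -> (mu i s <= mu i t)%E) /\
      (forall i (J : {set I}),
          (forall s, nonneg s -> (forall j, j \notin J -> s j = 0) ->
             mu i s \is a fin_num) /\
          (forall s, nonneg s -> (forall j, j \notin J -> s j = 0) ->
             forall e, 0 < e -> exists2 d, 0 < d &
             forall t, nonneg t -> (forall j, j \notin J -> t j = 0) ->
               supnorm (t - s) < d -> `|fine (mu i t) - fine (mu i s)| < e)) /\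
      (forall A : set (I -> R), (exists B, forall s, A s -> supnorm s <= B) ->
          forall e, 0 < e -> exists2 d, 0 < d &
          forall s0 s, A s0 -> nonneg s0 -> nonneg s -> supnorm (s - s0) <= d ->
            forall i, (`|mu i (restr (Ii i) s) - mu i (restr (Ii i) s0)| <= e%:E)%E).

(* Gamma_i(s) = mu_i([gamma_ij(s_j)]_{j in I_i}); real-valued via fine
   (mu is finite-valued on l^oo_+ by (M3), since I is finite). *)
Definition Gam (Ii : I -> {set I}) (gamma : I -> I -> R -> R)
    (mu : I -> (I -> R) -> \bar R) (s : I -> R) : I -> R :=
  fun i => fine (mu i (fun j => if j \in Ii i then gamma i j (s j) else 0)).

Definition Gam_rho Ii gamma mu (rho : R -> R) (s : I -> R) : I -> R :=
  fun i => Gam Ii gamma mu s i + rho (Gam Ii gamma mu s i).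

Definition NJI (T : (I -> R) -> (I -> R)) : Prop :=
  forall s, vpos s -> ~ vle s (T s).

(* interconnection graph: edge j -> i iff j \in Ii i; strongly connected *)
Definition strongly_connected (Ii : I -> {set I}) : Prop :=
  forall i j : I, connect (fun a b => a \in Ii b) i j.

Definition path_of_strict_decay Ii gamma mu (sigma : R -> I -> R) : Prop :=
  [/\ (exists rho, Kinf rho /\
         forall r, 0 <= r -> vle (Gam_rho Ii gamma mu rho (sigma r)) (sigma r)),
      (exists phimin phimax, [/\ Kinf phimin, Kinf phimax &
         forall r, 0 <= r -> forall i, phimin r <= sigma r i <= phimax r]),
      (forall i, Kinf (fun r => sigma r i)) &
      (forall K : set R, compact K -> K `<=` `]0, +oo[ ->
         exists l L, [/\ 0 < l, l <= L &
           forall i r1 r2 t1 t2, K r1 -> K r2 -> 0 <= t1 -> 0 <= t2 ->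
             sigma t1 i = r1 -> sigma t2 i = r2 ->
             (* t_k = sigma_i^{-1}(r_k) *)
             l * `|r1 - r2| <= `|t1 - t2| <= L * `|r1 - r2|])].

End Defs.

From mathcomp Require Import all_boot all_order all_algebra.
From mathcomp Require Import all_classical all_reals.
From mathcomp Require Import topology normedtype derive.
From mathcomp.algebra_tactics Require Import ring lra.
Import Order.TTheory GRing.Theory Num.Theory.
Import numFieldNormedType.Exports.
Set Implicit Arguments. Unset Strict Implicit. Unset Printing Implicit Defensive.
Local Open Scope ring_scope.

(* (a) => (b): [Gam_rho] for [rho / 2] satisfies NJI.  If [0 < s <= Gam_{rho/2} s], let
   [r] be the least level with [s <= sigma r].  Some coordinate [i] is tight at [r],
   and there [sigma_i r >= Gam_i (sigma r) + rho (Gam_i (sigma r))] exceeds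
   [Gam_{rho/2} s >= s_i] unless everything vanishes.

   (b) => (a): put [T = Gam_rho] and call [v] a decay point when [T v <= v].  NJI and
   strong connectivity give decay points above every level, and the [T]-orbit of a
   decay point decreases to [0].  Interpolating between consecutive orbit points
   produces decay points of every smaller coordinate sum, so the coordinatewise
   infimum [X t] of the decay points of sum [>= t] is again a decay point; [X] is
   nondecreasing and 1-Lipschitz with [X 0 = 0].  Along the edges every coordinate
   of a decay point bounds every other one from below through a K_infty function,
   so [X] is positive and unbounded in each coordinate.  Finally
   [sigma u = Gam_{rho/2} (X (tau u)) + e u] is a path of strict decay for [rho / 2],
   where [tau] inverts the strictly increasing reparametrisation
   [t + sum_i (Gam_{rho/2} (X t) + rho (Gam (X t)) / 2)_i] and [e] is a K_infty
   function below the margins [rho (Gam_i (X (tau u))) / 2]. *)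

Section Kinf.
Variable R : realType.
Implicit Types (f g : R -> R).

Lemma Kinf_lt g x y : Kinf g -> 0 <= x -> x < y -> g x < g y.
Proof. by case=> _ gi _ _; apply: gi. Qed.

Lemma Kinf_le g x y : Kinf g -> 0 <= x -> x <= y -> g x <= g y.
Proof.
move=> Kg x0; rewrite le_eqVlt => /orP[/eqP->//|xy].
exact/ltW/(Kinf_lt Kg).
Qed.

Lemma Kinf_ge0 g x : Kinf g -> 0 <= x -> 0 <= g x.
Proof. by move=> Kg x0; have := Kinf_le Kg (lexx 0) x0; case: Kg => ->. Qed.

Lemma Kinf_gt0 g x : Kinf g -> 0 < x -> 0 < g x.
Proof. by move=> Kg x0; have := Kinf_lt Kg (lexx 0) x0; case: Kg => ->. Qed.

Lemma Kinf_lt_inv g x y : Kinf g -> 0 <= y -> g x < g y -> 0 <= x -> x < y.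
Proof.
move=> Kg y0 gxy x0; rewrite ltNge; apply/negP => yx.
by have := Kinf_le Kg y0 yx; rewrite leNgt gxy.
Qed.

Lemma Kinf_cont g x e : Kinf g -> 0 <= x -> 0 < e -> exists2 d, 0 < d &
  forall y, 0 <= y -> `|x - y| < d -> `|g x - g y| < e.
Proof. by case=> _ _ gc _ x0 e0; exact: gc. Qed.

Lemma Kinf_unbounded g M : Kinf g -> exists2 x, 0 <= x & M <= g x.
Proof. by case=> _ _ _; apply. Qed.

Lemma Kinf_id : Kinf (fun x : R => x).
Proof.
split=> // [x _ e e0|M]; first by exists e.
by exists `|M|; [exact: normr_ge0 | exact: ler_norm].
Qed.

Lemma Kinf_comp f g : Kinf f -> Kinf g -> Kinf (fun x => f (g x)).
Proof.
move=> Kf Kg; split.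
- by case: Kg => -> _ _ _; case: Kf.
- by move=> x y x0 xy; apply: (Kinf_lt Kf); [exact: Kinf_ge0 | exact: Kinf_lt].
- move=> x x0 e e0.
  have [d1 d10 H1] := Kinf_cont Kf (Kinf_ge0 Kg x0) e0.
  have [d d0 H] := Kinf_cont Kg x0 d10.
  by exists d => // y y0 /(H y y0); apply: H1; exact: Kinf_ge0.
- move=> M; have [y y0 My] := Kinf_unbounded M Kf.
  have [x x0 yx] := Kinf_unbounded y Kg.
  by exists x => //; apply: le_trans My _; exact: Kinf_le.
Qed.

Lemma Kinf_half g : Kinf g -> Kinf (fun x => g x / 2).
Proof.
move=> Kg; split.
- by case: Kg => -> _ _ _; rewrite mul0r.
- by move=> x y x0 xy; have := Kinf_lt Kg x0 xy; lra.
- move=> x x0 e e0.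
  have e20 : 0 < e * 2 by lra.
  have [d d0 H] := Kinf_cont Kg x0 e20.
  exists d => // y y0 /(H y y0) ge.
  by rewrite -mulrBl normrM [`|2^-1|]ger0_norm; lra.
- by move=> M; have [x x0 Mx] := Kinf_unbounded (M * 2) Kg; exists x => //; lra.
Qed.

(* Near [x] the local Lipschitz constant is at most [C + x + 1]. *)
Lemma Kinf_locally_lipschitz f (C : R) : 0 <= C -> f 0 = 0 ->
  (forall x y, 0 <= x -> x < y -> f x < f y) ->
  (forall x y, 0 <= x -> x <= y -> f y - f x <= (y - x) * (C + y)) ->
  (forall M, exists2 x, 0 <= x & M <= f x) -> Kinf f.
Proof.
move=> C0 f0 fi fl fu; split => // x x0 e e0.
pose K := C + x + 1; have K0 : 0 < K by rewrite /K; lra.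
exists (Num.min 1 (e / K)); first by rewrite lt_min ltr01 divr_gt0.
move=> y y0; rewrite lt_min => /andP[xy1 /[dup] xye].
rewrite ltr_pdivlMr // => {}xye; rewrite ltr_distlC.
have [xy|yx] := leP x y.
- have fxy : f x <= f y.
    by move: xy; rewrite le_eqVlt => /orP[/eqP->//|/(fi _ _ x0)/ltW].
  have := fl x y x0 xy; rewrite distrC ger0_norm ?subr_ge0 // in xy1 xye.
  have : (y - x) * (C + y) <= (y - x) * K by apply: ler_wpM2l; rewrite /K; lra.
  by move=> *; apply/andP; split; lra.
- have := fi y x y0 yx; have := fl y x y0 (ltW yx).
  rewrite ger0_norm ?subr_ge0 ?(ltW yx) // in xy1 xye.
  have : (x - y) * (C + x) <= (x - y) * K by apply: ler_wpM2l; rewrite /K; lra.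
  by move=> *; apply/andP; split; lra.
Qed.

End Kinf.

Section FiniteFamilies.
Variables (R : realType) (T : finType).

Lemma fin_common_delta (Y : Type) (f : T -> Y -> R) (Q : T -> Y -> Prop) :
  (forall x, exists2 d, 0 < d & forall y, f x y < d -> Q x y) ->
  exists2 d, 0 < d & forall x y, f x y < d -> Q x y.
Proof.
move=> H; have /choice [df Hdf] : forall x, exists d, 0 < d /\
    forall y, f x y < d -> Q x y by move=> x; have [d d0 Hd] := H x; exists d.
exists (\big[Num.min/1]_x df x).
  by elim/big_ind: _ => // [x y x0 y0|x _]; [rewrite lt_min x0 y0 | exact: (Hdf x).1].
move=> x y xy; apply: (Hdf x).2; apply: (lt_le_trans xy); exact: bigmin_le.
Qed.

Lemma fin_eventually (Q : T -> R -> Prop) :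
  (forall x, exists r, forall r', r <= r' -> Q x r') ->
  exists r, forall x r', r <= r' -> Q x r'.
Proof.
move=> /choice [rf Hrf]; exists (\big[Num.max/0]_x rf x) => x r' /(le_trans _) rr'.
by apply/Hrf/rr'/le_bigmax.
Qed.

Lemma fin_eventually_nat (Q : T -> nat -> Prop) :
  (forall x, exists k, forall k', (k <= k')%N -> Q x k') ->
  exists k, forall x k', (k <= k')%N -> Q x k'.
Proof.
move=> /choice [kf Hkf]; exists (\max_x kf x) => x k' kk'.
by apply/Hkf/(leq_trans _ kk')/leq_bigmax.
Qed.

Lemma fin_pos_lower_bound (F : T -> R) :
  (forall x, 0 < F x) -> exists2 c, 0 < c & forall x, c <= F x.
Proof.
move=> F0; exists (\big[Num.min/1]_x F x); last by move=> x; exact: bigmin_le.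
by elim/big_ind: _ => // a b a0 b0; rewrite lt_min a0 b0.
Qed.

End FiniteFamilies.

Section RealBounds.
Variable R : realType.
Implicit Types (E : set R).

Lemma ltr_distlC_and (a b d : R) : (`|a - b| < d) <-> (a - d < b /\ b < a + d).
Proof. by rewrite ltr_distlC; split=> [/andP[]|[-> ->]]. Qed.

Lemma ler_distlC_and (a b d : R) : (`|a - b| <= d) <-> (a - d <= b /\ b <= a + d).
Proof. by rewrite ler_distlC; split=> [/andP[]|[-> ->]]. Qed.

Lemma inf_le_mem E x m : (forall y, E y -> m <= y) -> E x -> inf E <= x.
Proof. by move=> Em Ex; apply: ge_inf => //; exists m. Qed.

Lemma lb_le_inf_mem E x m : E x -> (forall y, E y -> m <= y) -> m <= inf E.
Proof. by move=> Ex Em; apply: lb_le_inf => //; exists x. Qed.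

Lemma inf_adherent_mem E x m e : E x -> (forall y, E y -> m <= y) -> 0 < e ->
  exists y, E y /\ y < inf E + e.
Proof.
move=> Ex Em e0.
by have [y Ey Hy] := inf_adherent e0 (conj (ex_intro _ x Ex) (ex_intro _ m Em)); exists y.
Qed.

Lemma sup_ge_mem E x M : (forall y, E y -> y <= M) -> E x -> x <= sup E.
Proof. by move=> EM Ex; apply: ub_le_sup => //; exists M. Qed.

Lemma sup_le_ub_mem E x M : E x -> (forall y, E y -> y <= M) -> sup E <= M.
Proof. by move=> Ex EM; apply: ge_sup => //; exists x. Qed.

Lemma sup_adherent_mem E x M e : E x -> (forall y, E y -> y <= M) -> 0 < e ->
  exists y, E y /\ sup E - e < y.
Proof.
move=> Ex EM e0.
by have [y Ey Hy] := sup_adherent e0 (conj (ex_intro _ x Ex) (ex_intro _ M EM)); exists y.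
Qed.

End RealBounds.

Section Vectors.
Variables (R : realType) (I : finType).
Implicit Types (s t a b w : I -> R).

Definition vsum s := \sum_i s i.

Lemma nonneg_vle s t : nonneg s -> vle s t -> nonneg t.
Proof. by move=> s0 st j; apply: le_trans (s0 j) (st j). Qed.

Lemma supnorm_ge s j : `|s j| <= supnorm s.
Proof. exact: (le_bigmax 0 (fun i => `|s i|) j). Qed.

Lemma supnorm_le s c : 0 <= c -> (forall j, `|s j| <= c) -> supnorm s <= c.
Proof. by move=> c0 sc; apply: bigmax_le. Qed.

Lemma vsum_ge0 s : nonneg s -> 0 <= vsum s.
Proof. by move=> s0; apply: sumr_ge0 => i _; exact: s0. Qed.

Lemma vsum_ge_coord s j : nonneg s -> s j <= vsum s.
Proof. by move=> s0; rewrite /vsum (bigD1 j) //= lerDl; apply: sumr_ge0 => i _. Qed.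

Lemma ler_vsum s t : vle s t -> vsum s <= vsum t.
Proof. by move=> st; apply: ler_sum => i _; exact: st. Qed.

Lemma ler_coord_vsumB s t j : vle s t -> t j - s j <= vsum t - vsum s.
Proof.
move=> st; rewrite /vsum -sumrB.
by apply: (@vsum_ge_coord (fun i => t i - s i)) => i; rewrite subr_ge0.
Qed.

Lemma ler_vsum_dist a b c : (forall i, `|a i - b i| <= c) ->
  `|vsum a - vsum b| <= #|I|%:R * c.
Proof.
move=> abc; rewrite /vsum -sumrB; apply: le_trans (ler_norm_sum _ _ _) _.
by apply: le_trans (ler_sum _ (fun i _ => abc i)) _; rewrite sumr_const mulr_natl.
Qed.

Lemma exists_coord_ge_mean (i0 : I) s c : c <= vsum s -> exists j, c / #|I|%:R <= s j.
Proof.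
move=> cs; apply/not_existsP => /= small.
have nI : 0 < (#|I|%:R : R) by rewrite ltr0n; apply/card_gt0P; exists i0.
have : vsum s < \sum_(i : I) (c / #|I|%:R).
  apply: ltr_sum; first by apply/hasP; exists i0 => //; rewrite mem_index_enum.
  by move=> i _; rewrite ltNge; apply/negP => /small.
by rewrite sumr_const -[_ *+ _]mulr_natr divfK ?gt_eqF //; lra.
Qed.

(* The point [w + th (b - w)] with [th = h / (vsum b - vsum w)]. *)
Lemma interp_vsum_step a w b h : vle a w -> vle w b -> 0 <= h ->
  vsum w + h <= vsum b ->
  exists w', [/\ vle a w', vle w' b, vle w w', (forall i, w' i <= w i + h) &
     vsum w + h <= vsum w'].
Proof.
move=> aw wb h0 hb; have [->|hn0] := eqVneq h 0.
  by exists w; split=> [||i|i|]; rewrite ?addr0.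
have hpos : 0 < h by rewrite lt_neqAle eq_sym hn0 h0.
pose D := vsum b - vsum w; have D0 : 0 < D by rewrite /D; lra.
pose th := h / D.
have th0 : 0 <= th by apply: divr_ge0; lra.
have th1 : th <= 1 by rewrite /th ler_pdivrMr // mul1r /D; lra.
have thD : th * D = h by rewrite /th divfK // gt_eqF.
have step_ge0 i : 0 <= th * (b i - w i) by apply: mulr_ge0 => //; have := wb i; lra.
exists (fun i => w i + th * (b i - w i)); split.
- by move=> i; have := aw i; have := step_ge0 i; lra.
- move=> i; have := wb i => wbi.
  have : th * (b i - w i) <= 1 * (b i - w i) by apply: ler_wpM2r => //; lra.
  lra.
- by move=> i; have := step_ge0 i; lra.
- move=> i; have : th * (b i - w i) <= th * D by apply/ler_wpM2l/ler_coord_vsumB.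
  lra.
- by rewrite /vsum big_split /= -mulr_sumr sumrB -/(vsum _) -/(vsum _) -/D thD.
Qed.

End Vectors.

(** * Gain operators *)

Section GainOperator.
Variables (R : realType) (I : finType) (Ii : I -> {set I})
  (gamma : I -> I -> R -> R) (mu : I -> (I -> R) -> \bar R).
Hypothesis HG : is_gain_operator Ii gamma mu.
Implicit Types (s t : I -> R).

Local Notation G := (Gam Ii gamma mu).

Definition gain_arg i s : I -> R := fun j => if j \in Ii i then gamma i j (s j) else 0.

Lemma Gam_gain_arg s i : G s i = fine (mu i (gain_arg i s)). Proof. by []. Qed.

Lemma gain_Kinf i j : j \in Ii i -> Kinf (gamma i j).
Proof. by case: HG => _ [H _]; apply: H. Qed.

Lemma mu_ge0 i s : nonneg s -> (0 <= mu i s)%E.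
Proof. by case: HG => _ [_ [_ [_ [H _]]]]; apply: H. Qed.

Lemma mu_mono i s t : nonneg s -> nonneg t -> vle s t -> (mu i s <= mu i t)%E.
Proof. by case: HG => _ [_ [_ [_ [_ [H _]]]]]; apply: H. Qed.

(* As [I] is finite, (M3) with [J = setT] covers all nonnegative vectors. *)
Lemma mu_fin_num i s : nonneg s -> mu i s \is a fin_num.
Proof.
case: HG => _ [_ [_ [_ [_ [_ [H _]]]]]] s0.
by apply: (H i (setTfor I)).1 => // j; rewrite finset.in_setT.
Qed.

Lemma mu_cont i s e : nonneg s -> 0 < e -> exists2 d, 0 < d &
  forall t, nonneg t -> supnorm (t - s) < d -> `|fine (mu i t) - fine (mu i s)| < e.
Proof.
case: HG => _ [_ [_ [_ [_ [_ [H _]]]]]] s0 e0.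
have offT (v : I -> R) j : j \notin setTfor I -> v j = 0 by rewrite finset.in_setT.
have [d d0 Hd] := (H i (setTfor I)).2 s s0 (offT s) e e0.
by exists d => // t t0; exact: (Hd t t0 (offT t)).
Qed.

Lemma gain_arg_ge0 i s : nonneg s -> nonneg (gain_arg i s).
Proof. by move=> s0 j; rewrite /gain_arg; case: ifP => // /gain_Kinf/Kinf_ge0; apply. Qed.

Lemma gain_arg_mono i s t : nonneg s -> vle s t -> vle (gain_arg i s) (gain_arg i t).
Proof. by move=> s0 st j; rewrite /gain_arg; case: ifP => // /gain_Kinf/Kinf_le; apply. Qed.

Lemma Gam_ge0 s i : nonneg s -> 0 <= G s i.
Proof. by move=> s0; apply/fine_ge0/mu_ge0/gain_arg_ge0. Qed.

Lemma Gam_mono s t : nonneg s -> vle s t -> vle (G s) (G t).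
Proof.
move=> s0 st i; have t0 := nonneg_vle s0 st.
apply: fine_le; try apply: mu_fin_num; try exact: gain_arg_ge0.
by apply: mu_mono; [exact: gain_arg_ge0 | exact: gain_arg_ge0 | exact: gain_arg_mono].
Qed.

Lemma Gam0 i : G (fun _ => 0) i = 0.
Proof.
case: HG => _ [_ [_ [[xi [_ mu0]] _]]]; rewrite Gam_gain_arg.
have -> : gain_arg i (fun _ => 0) = (fun _ => 0).
  by apply: funext => j; rewrite /gain_arg; case: ifP => // /gain_Kinf[].
by rewrite (mu0 i).1.
Qed.

Lemma Gam_ge_edge : exists2 xi, Kinf xi &
  forall s i j, nonneg s -> j \in Ii i -> xi (gamma i j (s j)) <= G s i.
Proof.
case: HG => _ [_ [_ [[xi [Kxi Hxi]] _]]]; exists xi => // s i j s0 ji.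
apply: (le_trans (y := xi (supnorm (gain_arg i s)))).
  apply: (Kinf_le Kxi); first exact: (Kinf_ge0 (gain_Kinf ji)).
  by apply: le_trans (supnorm_ge _ j); rewrite /gain_arg ji; exact: ler_norm.
rewrite -lee_fin fineK; last exact/mu_fin_num/gain_arg_ge0.
exact: (Hxi i).2 (gain_arg_ge0 i s0).
Qed.

Lemma Gam_cont s e : nonneg s -> 0 < e -> exists2 d, 0 < d &
  forall t, nonneg t -> (forall j, `|s j - t j| < d) -> forall i, `|G s i - G t i| < e.
Proof.
move=> s0 e0.
have mu_near i : exists2 d, 0 < d & forall w, supnorm (w - gain_arg i s) < d ->
    nonneg w -> `|fine (mu i w) - fine (mu i (gain_arg i s))| < e.
  have [d d0 Hd] := mu_cont i (gain_arg_ge0 i s0) e0.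
  by exists d => // w ? ?; exact: Hd.
have [d1 d10 H1] := fin_common_delta mu_near.
have d120 : 0 < d1 / 2 by lra.
have gamma_near (ij : I * I) : exists2 d, 0 < d & forall r, `|s ij.2 - r| < d ->
    ij.2 \in Ii ij.1 -> 0 <= r -> `|gamma ij.1 ij.2 (s ij.2) - gamma ij.1 ij.2 r| < d1 / 2.
  case: ij => i j /=; case ji: (j \in Ii i); last by exists 1.
  have [d d0 Hd] := Kinf_cont (gain_Kinf ji) (s0 j) d120.
  by exists d => // r ? _ ?; exact: Hd.
have [d2 d20 H2] := fin_common_delta gamma_near.
exists d2 => // t t0 st i.
rewrite distrC !Gam_gain_arg; apply: (H1 i); last exact: gain_arg_ge0.
suff : supnorm (gain_arg i t - gain_arg i s) <= d1 / 2 by lra.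
apply: supnorm_le => [|j]; first lra.
rewrite !fctE /gain_arg; case: ifP => ji; last by rewrite subr0 normr0; lra.
by rewrite distrC; apply/ltW/(H2 (i, j)).
Qed.

Section Gam_rho.
Variable rho : R -> R.
Hypothesis Krho : Kinf rho.
Local Notation T := (Gam_rho Ii gamma mu rho).

Lemma Gam_rhoE s i : T s i = G s i + rho (G s i). Proof. by []. Qed.

Lemma Gam_le_Gam_rho s i : nonneg s -> G s i <= T s i.
Proof. by move=> s0; rewrite Gam_rhoE lerDl; apply/(Kinf_ge0 Krho)/Gam_ge0. Qed.

Lemma Gam_rho_ge0 s i : nonneg s -> 0 <= T s i.
Proof. by move=> s0; apply: le_trans (Gam_le_Gam_rho i s0); exact: Gam_ge0. Qed.

Lemma Gam_rho_mono s t : nonneg s -> vle s t -> vle (T s) (T t).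
Proof.
move=> s0 st i; have Gst := Gam_mono s0 st i.
by have := Kinf_le Krho (Gam_ge0 i s0) Gst; rewrite !Gam_rhoE; lra.
Qed.

Lemma Gam_rho0 i : T (fun _ => 0) i = 0.
Proof. by rewrite Gam_rhoE Gam0; case: Krho => ->; rewrite addr0. Qed.

Lemma Gam_rho_cont s e : nonneg s -> 0 < e -> exists2 d, 0 < d &
  forall t, nonneg t -> (forall j, `|s j - t j| < d) -> forall i, `|T s i - T t i| < e.
Proof.
move=> s0 e0; have e20 : 0 < e / 2 by lra.
have rho_near i : exists2 d, 0 < d & forall r, `|G s i - r| < d ->
    0 <= r -> `|rho (G s i) - rho r| < e / 2.
  have [d d0 Hd] := Kinf_cont Krho (Gam_ge0 i s0) e20.
  by exists d => // r ? ?; exact: Hd.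
have [d1 d10 H1] := fin_common_delta rho_near.
have dm0 : 0 < Num.min d1 (e / 2) by rewrite lt_min d10 e20.
have [d d0 Hd] := Gam_cont s0 dm0.
exists d => // t t0 st i.
have := Hd t t0 st i; rewrite lt_min.
move=> /andP[/H1/(_ (Gam_ge0 i t0))/ltr_distlC_and rhoG /ltr_distlC_and Gst].
by rewrite !Gam_rhoE; apply/ltr_distlC_and; lra.
Qed.

End Gam_rho.
End GainOperator.

(** * Paths of strict decay give NJI *)

Section FirstDominatingLevel.
Variables (R : realType) (I : finType) (sig : R -> I -> R).
Hypothesis sigK : forall i, Kinf (fun r => sig r i).

(* [r] is the infimum of the levels [r'] with [s <= sig r']; if no coordinate
   were tight at [r > 0], continuity would allow a smaller level. *)
Lemma first_dominating_level s : nonneg s ->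
  exists2 r, 0 <= r & vle s (sig r) /\ (r = 0 \/ exists i, sig r i <= s i).
Proof.
move=> s0; pose A : set R := fun r => 0 <= r /\ vle s (sig r).
have [r1 Hr1] : exists r, forall i r', r <= r' -> s i <= sig r' i.
  apply: fin_eventually => i; have [x x0 sx] := Kinf_unbounded (s i) (sigK i).
  by exists x => r' xr'; apply: le_trans sx _; exact: (Kinf_le (sigK i)).
have Ar : A (Num.max r1 0).
  by split=> [|i]; [rewrite le_max lexx orbT | apply: Hr1; rewrite le_max lexx].
have Alb y : A y -> 0 <= y by case.
have rs0 : 0 <= inf A by apply: lb_le_inf_mem Ar Alb.
have dominated : vle s (sig (inf A)).
  move=> i; rewrite leNgt; apply/negP => lt_sig.
  have e0 : 0 < s i - sig (inf A) i by lra.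
  have [d d0 Hd] := Kinf_cont (sigK i) rs0 e0.
  have [a [Aa a_lt]] := inf_adherent_mem Ar Alb d0.
  have rs_a : inf A <= a by apply: inf_le_mem Alb Aa.
  have close : `|inf A - a| < d by apply/ltr_distlC_and; split; lra.
  by have /ltr_distlC_and := Hd a (Alb a Aa) close; have := Aa.2 i; lra.
exists (inf A) => //; split => //.
have [[i tight]|loose] := pselect (exists i, sig (inf A) i <= s i); first by right; exists i.
left; apply/eqP; rewrite eq_le rs0 andbT leNgt; apply/negP => rs_pos.
have strict i : s i < sig (inf A) i.
  by rewrite ltNge; apply/negP => si; apply: loose; exists i.
have near_rs i : exists2 d, 0 < d & forall r, `|inf A - r| < d -> 0 <= r -> s i < sig r i.
  have e0 : 0 < sig (inf A) i - s i by have := strict i; lra.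
  have [d d0 Hd] := Kinf_cont (sigK i) rs0 e0.
  by exists d => // r dr r0; have /ltr_distlC_and := Hd r r0 dr; lra.
have [d d0 Hd] := fin_common_delta near_rs.
pose m := Num.min d (inf A).
have m0 : 0 < m by rewrite lt_min d0 rs_pos.
have md : m <= d by rewrite /m ge_min lexx.
have mA : m <= inf A by rewrite /m ge_min lexx orbT.
have : A (inf A - m / 2).
  by split=> [|i]; [lra | apply/ltW/Hd; [apply/ltr_distlC_and; split|]; lra].
by move=> /(inf_le_mem Alb); lra.
Qed.

End FirstDominatingLevel.

Lemma NJI_of_path_of_strict_decay (R : realType) (I : finType) (Ii : I -> {set I})
    (gamma : I -> I -> R -> R) (mu : I -> (I -> R) -> \bar R) :
  is_gain_operator Ii gamma mu ->
  (exists sigma, path_of_strict_decay Ii gamma mu sigma) ->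
  exists rho, Kinf rho /\ NJI (Gam_rho Ii gamma mu rho).
Proof.
move=> HG [sig [[rho [Krho decay]] _ sigK _]].
exists (fun x => rho x / 2); split=> [|s [s0 s_neq0] s_sub]; first exact: Kinf_half.
have sig0 i : sig 0 i = 0 by case: (sigK i).
have [r r0 [dom level]] := first_dominating_level sigK s0.
suff r_eq0 : r = 0.
  by apply/s_neq0/funext => j; have := dom j; have := s0 j; rewrite r_eq0 sig0; lra.
case: level => [//|[i tight]].
have sig_r0 : nonneg (sig r) by move=> j; exact: (Kinf_ge0 (sigK j)).
have := decay r r0 i; have := s_sub i; rewrite /Gam_rho.
set g := Gam Ii gamma mu (sig r) i => s_le sig_ge.
have g0 : 0 <= g by exact: Gam_ge0.
have Gs_g : Gam Ii gamma mu s i <= g by exact: Gam_mono.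
have rho_le := Kinf_le Krho (Gam_ge0 HG i s0) Gs_g.
have [g_eq0|g_neq0] := eqVneq g 0; last first.
  have g_pos : 0 < g by rewrite lt_neqAle eq_sym g_neq0 g0.
  by have := Kinf_gt0 Krho g_pos; have := dom i; lra.
apply/eqP; rewrite eq_le r0 andbT leNgt; apply/negP => r_pos.
have := Kinf_gt0 (sigK i) r_pos; have := Gam_ge0 HG i s0.
have rho0 : rho 0 = 0 by case: Krho.
by rewrite g_eq0 rho0 in sig_ge rho_le Gs_g; lra.
Qed.

(** * Decay points *)

Lemma strongly_connected_ind (I : finType) (Ii : I -> {set I}) (P : I -> Prop) j :
  strongly_connected Ii -> P j -> (forall a b, a \in Ii b -> P b -> P a) ->
  forall k, P k.
Proof.
move=> HSC Pj step k; have /connectP [p p_path j_last] := HSC k j.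
rewrite j_last {j_last} in Pj.
elim: p k p_path Pj => [|a p IH] k //= /andP[ka p_path] Pj.
exact/(step k a ka)/IH.
Qed.

Section DecayPoints.
Local Open Scope classical_set_scope.
Variables (R : realType) (I : finType) (i0 : I) (Ii : I -> {set I})
  (gamma : I -> I -> R -> R) (mu : I -> (I -> R) -> \bar R).
Hypothesis HG : is_gain_operator Ii gamma mu.
Hypothesis HSC : strongly_connected Ii.
Variable rho : R -> R.
Hypothesis Krho : Kinf rho.
Hypothesis HN : NJI (Gam_rho Ii gamma mu rho).
Variable xi : R -> R.
Hypothesis Kxi : Kinf xi.
Hypothesis Hxi : forall s i j, nonneg s -> j \in Ii i ->
  xi (gamma i j (s j)) <= Gam Ii gamma mu s i.
Implicit Types (s u v w y z : I -> R).

Local Notation T := (Gam_rho Ii gamma mu rho).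

Definition decay_point x := nonneg x /\ vle (T x) x.

Lemma Gam_rho_ge_edge s i j : nonneg s -> j \in Ii i -> xi (gamma i j (s j)) <= T s i.
Proof. by move=> s0 ji; apply: le_trans (Hxi s0 ji) (Gam_le_Gam_rho HG Krho i s0). Qed.

Lemma NJI_sub_eq0 x : nonneg x -> vle x (T x) -> x = fun _ => 0.
Proof. by move=> x0 xT; apply: contrapT => x_neq0; exact: (HN (conj x0 x_neq0)). Qed.

Lemma Gam_rho_le_of_approx_below v : nonneg v ->
  (forall d, 0 < d -> exists w, [/\ nonneg w, vle w v, vle (T w) v &
     forall i, v i - d < w i]) -> vle (T v) v.
Proof.
move=> v0 approx i; apply/ler_addgt0Pr => e e0.
have [d d0 Hd] := Gam_rho_cont HG Krho v0 e0.
have [w [w0 wv Twv vw]] := approx d d0.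
have close j : `|v j - w j| < d by apply/ltr_distlC_and; have := wv j; have := vw j; lra.
by have /ltr_distlC_and := Hd w w0 close i; have := Twv i; lra.
Qed.

Lemma decay_point_of_approx_above (P : (I -> R) -> Prop) v : nonneg v ->
  (forall w, P w -> decay_point w /\ vle v w) ->
  (forall i e, 0 < e -> exists w, P w /\ w i <= v i + e) -> decay_point v.
Proof.
move=> v0 above approx; split => // i; apply/ler_addgt0Pr => e e0.
have [w [Pw wi]] := approx i e e0; have [[w0 Tw] vw] := above w Pw.
by have := Gam_rho_mono HG Krho v0 vw i; have := Tw i; lra.
Qed.

Definition max_step (m : R) u : I -> R := fun i => Num.max (T u i) m.
Definition max_iter m k := iter k (max_step m) (fun _ => m).

Lemma max_iter_ge m k i : m <= max_iter m k i.
Proof. by case: k => [|k] //=; rewrite /max_step le_max lexx orbT. Qed.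

Lemma max_iter_nonneg m k : 0 <= m -> nonneg (max_iter m k).
Proof. by move=> m0 i; apply: le_trans m0 (max_iter_ge m k i). Qed.

Lemma max_iter_incr m k : 0 <= m -> vle (max_iter m k) (max_iter m k.+1).
Proof.
move=> m0; elim: k => [|k IH] i; first by rewrite /= /max_step le_max lexx orbT.
have := Gam_rho_mono HG Krho (max_iter_nonneg k m0) IH i.
by rewrite /= /max_step ge_max !le_max => ->; rewrite lexx !orbT.
Qed.

Lemma max_iter_mono m k k' : 0 <= m -> (k <= k')%N -> vle (max_iter m k) (max_iter m k').
Proof.
move=> m0 /subnKC <-; elim: (k' - k)%N => [|d IH] i; first by rewrite addn0.
by apply: le_trans (IH i) _; rewrite addnS; exact: max_iter_incr.
Qed.

(* If every coordinate eventually exceeded [m], a late iterate [u] would satisfy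
   [u <= T u], against NJI. *)
Lemma max_iter_stalls m : 0 < m -> exists i1, forall k, max_iter m k i1 <= m.
Proof.
move=> m0; apply: contrapT => no_stall; have m0' : 0 <= m by lra.
have grows i : exists k, m < max_iter m k i.
  apply: contrapT => no_k; apply: no_stall; exists i => k.
  by rewrite leNgt; apply/negP => mk; apply: no_k; exists k.
have [K HK] : exists K, forall i k', (K <= k')%N -> m < max_iter m k' i.
  apply: fin_eventually_nat => i; have [k mk] := grows i.
  by exists k => k' kk'; apply: lt_le_trans mk _; exact: max_iter_mono.
have sub : vle (max_iter m K) (T (max_iter m K)).
  move=> i; have := HK i K.+1 (leqnSn K); rewrite /= /max_step lt_max ltxx orbF => mT.
  by have := max_iter_incr K m0' i; rewrite /= /max_step (max_l (ltW mT)).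
have := NJI_sub_eq0 (max_iter_nonneg K m0') sub => /(congr1 (fun f => f i0)).
by have := max_iter_ge m K i0; lra.
Qed.

Lemma max_iter_bounded m j : 0 < m -> exists M, forall k, max_iter m k j <= M.
Proof.
move=> m0; have [i1 stall] := max_iter_stalls m0; move: j.
apply: (strongly_connected_ind (j := i1)) => //; first by exists m.
move=> a b ab [M HM]; have Kc := Kinf_comp Kxi (gain_Kinf HG ab).
have [y y0 My] := Kinf_unbounded (M + 1) Kc.
exists y => k; have uk0 := max_iter_nonneg k (ltW m0).
have edge : xi (gamma b a (max_iter m k a)) <= M.
  apply: le_trans (Gam_rho_ge_edge uk0 ab) (le_trans _ (HM k.+1)).
  by rewrite /= /max_step le_max lexx.
by apply/ltW/(Kinf_lt_inv Kc y0 _ (uk0 a)) => /=; lra.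
Qed.

(* [v] is the supremum of the iterates, bounded by [max_iter_bounded]. *)
Lemma decay_point_above m : 0 < m -> exists v, decay_point v /\ forall i, m <= v i.
Proof.
move=> m0; have m0' : 0 <= m by lra.
pose E i := [set x | exists k, x = max_iter m k i].
have /choice [M HM] := fun j => max_iter_bounded j m0.
have E_ub i x : E i x -> x <= M i by case=> k ->.
have E0 i : E i (max_iter m 0 i) by exists 0%N.
pose v i := sup (E i).
have v_ge k i : max_iter m k i <= v i by apply: (sup_ge_mem (E_ub i)); exists k.
have v0 : nonneg v by move=> i; apply: le_trans (v_ge 0%N i); exact: max_iter_nonneg.
exists v; split; last by move=> i; apply: le_trans (v_ge 0%N i); exact: max_iter_ge.
split => //; apply: Gam_rho_le_of_approx_below => // d d0.
have [K HK] : exists K, forall i k', (K <= k')%N -> v i - d < max_iter m k' i.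
  apply: fin_eventually_nat => i.
  have [_ [[k ->] vk]] := sup_adherent_mem (E0 i) (E_ub i) d0.
  by exists k => k' kk'; apply: lt_le_trans vk _; exact: (max_iter_mono m0' kk' i).
exists (max_iter m K); split=> // [|i|i]; first exact: max_iter_nonneg.
- by apply: le_trans (v_ge K.+1 i); rewrite /= /max_step le_max lexx.
- exact: HK.
Qed.

Definition gain_orbit y k := iter k T y.

Lemma gain_orbitS y k : gain_orbit y k.+1 = T (gain_orbit y k). Proof. by []. Qed.

Lemma decay_point_Gam_rho x : decay_point x -> decay_point (T x).
Proof.
move=> [x0 Tx]; split=> [i|]; first exact: Gam_rho_ge0.
exact: (Gam_rho_mono HG Krho (fun i => Gam_rho_ge0 HG Krho i x0) Tx).
Qed.

Lemma gain_orbit_decay y k : decay_point y -> decay_point (gain_orbit y k).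
Proof. by move=> y_dec; elim: k => [|k IH] //; exact: decay_point_Gam_rho. Qed.

Lemma gain_orbit_nonincr y k k' : decay_point y -> (k <= k')%N ->
  vle (gain_orbit y k') (gain_orbit y k).
Proof.
move=> y_dec /subnKC <-; elim: (k' - k)%N => [|d IH] i; first by rewrite addn0.
by apply: le_trans _ (IH i); rewrite addnS; exact: (gain_orbit_decay _ y_dec).2.
Qed.

(* The limit of the orbit is a fixed point of [T], hence zero by NJI. *)
Lemma gain_orbit_inf_eq0 y : decay_point y ->
  (fun i => inf [set x | exists k, x = gain_orbit y k i]) = fun _ => 0.
Proof.
move=> y_dec; set z := fun i => _.
have lb0 i x : [set x | exists k, x = gain_orbit y k i] x -> 0 <= x.
  by case=> k ->; exact: (gain_orbit_decay k y_dec).1.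
have E0 i : [set x | exists k, x = gain_orbit y k i] (gain_orbit y 0 i) by exists 0%N.
have z_le k i : z i <= gain_orbit y k i by apply: (inf_le_mem (lb0 i)); exists k.
have z0 : nonneg z by move=> i; exact: (lb_le_inf_mem (E0 i) (lb0 i)).
apply: NJI_sub_eq0 => // i; apply/ler_addgt0Pr => e e0.
have [d d0 Hd] := Gam_rho_cont HG Krho z0 e0.
have [K HK] : exists K, forall j k', (K <= k')%N -> gain_orbit y k' j < z j + d.
  apply: fin_eventually_nat => j.
  have [_ [[k ->] zk]] := inf_adherent_mem (E0 j) (lb0 j) d0.
  by exists k => k' kk'; apply: le_lt_trans zk; exact: gain_orbit_nonincr.
have close j : `|z j - gain_orbit y K j| < d.
  by apply/ltr_distlC_and; have := HK j K (leqnn K); have := z_le K j; split; lra.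
have /ltr_distlC_and := Hd _ (gain_orbit_decay K y_dec).1 close i.
by have := z_le K.+1 i; rewrite gain_orbitS; lra.
Qed.

Lemma gain_orbit_vanishes y e : decay_point y -> 0 < e ->
  exists k, forall i, gain_orbit y k i <= e.
Proof.
move=> y_dec e0; have z_eq0 := gain_orbit_inf_eq0 y_dec.
have [K HK] : exists K, forall j k', (K <= k')%N -> gain_orbit y k' j < e.
  apply: fin_eventually_nat => j.
  have lb0 x : [set x | exists k, x = gain_orbit y k j] x -> 0 <= x.
    by case=> k ->; exact: (gain_orbit_decay k y_dec).1.
  have [_ [[k ->] zk]] := inf_adherent_mem (ex_intro _ 0%N erefl) lb0 e0.
  move: zk; rewrite (congr1 (fun f => f j) z_eq0) add0r => zk.
  by exists k => k' kk'; apply: le_lt_trans (gain_orbit_nonincr y_dec kk' j) zk.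
by exists K => i; apply/ltW/HK.
Qed.

(* Following a path from [j] to [i] in the graph, each edge gives
   [xi (gamma (z a)) <= T z b <= z b]. *)
Lemma decay_coord_lower_bound i j : exists2 kap, Kinf kap &
  forall z, decay_point z -> kap (z j) <= z i.
Proof.
move: j; apply: (strongly_connected_ind (j := i)) => //.
  by exists id => //; exact: Kinf_id.
move=> a b ab [kap Kkap Hkap]; have Kc := Kinf_comp Kxi (gain_Kinf HG ab).
exists (fun x => kap (xi (gamma b a x))) => [|z [z0 Tz]]; first exact: Kinf_comp.
apply: le_trans (Hkap z (conj z0 Tz)); apply: (Kinf_le Kkap); first exact: (Kinf_ge0 Kc).
exact: le_trans (Gam_rho_ge_edge z0 ab) (Tz b).
Qed.

Lemma decay_coord_pos i t : 0 < t -> exists2 c, 0 < c &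
  forall z, decay_point z -> t <= vsum z -> c <= z i.
Proof.
move=> t0; have /choice [kap Hkap] : forall j, exists kap, Kinf kap /\
    forall z, decay_point z -> kap (z j) <= z i.
  by move=> j; have [kap ? ?] := decay_coord_lower_bound i j; exists kap.
have nI : 0 < (#|I|%:R : R) by rewrite ltr0n; apply/card_gt0P; exists i0.
have tn0 : 0 < t / #|I|%:R by apply: divr_gt0.
have [c c0 Hc] := fin_pos_lower_bound (fun j => Kinf_gt0 (Hkap j).1 tn0).
exists c => // z z_dec zt; have [j zj] := exists_coord_ge_mean i0 zt.
apply: le_trans (Hc j) (le_trans _ ((Hkap j).2 z z_dec)).
exact: (Kinf_le (Hkap j).1 (ltW tn0)).
Qed.

Lemma decay_coord_unbounded i M : exists t, forall z, decay_point z -> t <= vsum z -> M <= z i.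
Proof.
have nI : 0 < (#|I|%:R : R) by rewrite ltr0n; apply/card_gt0P; exists i0.
have large j : exists r, forall r', r <= r' ->
    forall z, decay_point z -> r' / #|I|%:R <= z j -> M <= z i.
  have [kap Kkap Hkap] := decay_coord_lower_bound i j.
  have [x x0 Mx] := Kinf_unbounded M Kkap.
  exists (x * #|I|%:R) => r' xr' z z_dec zj.
  apply: le_trans Mx (le_trans _ (Hkap z z_dec)); apply: (Kinf_le Kkap x0).
  by apply: le_trans zj; rewrite ler_pdivlMr.
have [t Ht] := fin_eventually large.
exists t => z z_dec zt; have [j zj] := exists_coord_ge_mean i0 zt.
exact: (Ht j t (lexx _) z z_dec zj).
Qed.

End DecayPoints.

(** * A monotone Lipschitz curve of decay points *)

Lemma exists_nat_ge (R : realType) (r : R) : exists N : nat, r <= N%:R.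
Proof. by exists (Num.truncn r).+1; exact/ltW/truncnS_gt. Qed.

Section DecayCurve.
Local Open Scope classical_set_scope.
Variables (R : realType) (I : finType) (i0 : I) (Ii : I -> {set I})
  (gamma : I -> I -> R -> R) (mu : I -> (I -> R) -> \bar R).
Hypothesis HG : is_gain_operator Ii gamma mu.
Variable rho : R -> R.
Hypothesis Krho : Kinf rho.
Hypothesis HN : NJI (Gam_rho Ii gamma mu rho).
Implicit Types (y w : I -> R).

Local Notation decay_point := (decay_point Ii gamma mu rho).
Local Notation gain_orbit := (gain_orbit Ii gamma mu rho).

Definition orbit_bracketed y w :=
  exists k, vle (gain_orbit y k.+1) w /\ vle w (gain_orbit y k).

Lemma decay_point_bracketed y w : decay_point y -> orbit_bracketed y w -> decay_point w.
Proof.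
move=> y_dec [k [lo hi]].
have w0 : nonneg w by apply: nonneg_vle lo; exact: (gain_orbit_decay HG Krho k.+1 y_dec).1.
by split => // i; apply: le_trans (Gam_rho_mono HG Krho w0 hi i) (lo i).
Qed.

(* Walk down the orbit, interpolating inside the first bracket
   [gain_orbit (k+1) <= . <= gain_orbit k] that contains the target sum. *)
Lemma bracketed_step y : decay_point y -> forall k w h,
  vle (gain_orbit y k.+1) w -> vle w (gain_orbit y k) -> 0 <= h -> vsum w + h <= vsum y ->
  exists w', [/\ orbit_bracketed y w', vle w w', (forall i, w' i <= w i + h) &
     vsum w + h <= vsum w'].
Proof.
move=> y_dec; elim=> [|k IH] w h lo hi h0 hy.
  have [w' [? ? ? ? ?]] := interp_vsum_step lo hi h0 hy.
  by exists w'; split => //; exists 0%N.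
have [fits|beyond] := leP (vsum w + h) (vsum (gain_orbit y k.+1)).
  have [w' [? ? ? ? ?]] := interp_vsum_step lo hi h0 fits.
  by exists w'; split => //; exists k.+1.
pose h1 := vsum (gain_orbit y k.+1) - vsum w.
have h10 : 0 <= h1 by rewrite /h1; have := ler_vsum hi; lra.
have [||w'' [w''_br hi_w'' w''_le w''_sum]] := IH (gain_orbit y k.+1) (h - h1)
  (fun i => lexx _) (gain_orbit_nonincr HG Krho y_dec (leqnSn k)); try by rewrite /h1; lra.
exists w''; split => // [i|i|].
- exact: le_trans (hi i) (hi_w'' i).
- by have := w''_le i; have := ler_coord_vsumB i hi; rewrite -/h1; lra.
- by move: w''_sum; rewrite /h1; lra.
Qed.

Variable B : nat -> I -> R.
Hypothesis B_decay : forall m, decay_point (B m).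
Hypothesis B_ge : forall m i, m%:R <= B m i.

Lemma vsum_B_ge m : m%:R <= vsum (B m).
Proof. by apply: le_trans (B_ge m i0) _; exact: vsum_ge_coord (B_decay m).1. Qed.

Definition far_bracketed M w := exists m, (M <= m)%N /\ orbit_bracketed (B m) w.

Lemma far_bracketed_decay M w : far_bracketed M w -> decay_point w.
Proof. by case=> m [_]; exact: decay_point_bracketed. Qed.

Lemma far_bracketed_B M m : (M <= m)%N -> far_bracketed M (B m).
Proof. by move=> Mm; exists m; split => //; exists 0%N; split => //; exact: (B_decay m).2. Qed.

Definition lower_set M t i := [set x | exists w, far_bracketed M w /\ t <= vsum w /\ x = w i].
Definition lower_env M t i := inf (lower_set M t i).

Lemma lower_set_ge0 M t i x : lower_set M t i x -> 0 <= x.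
Proof. by case=> w [Mw [_ ->]]; exact: (far_bracketed_decay Mw).1. Qed.

Lemma lower_set_nonempty M t i : exists x, lower_set M t i x.
Proof.
have [N tN] := exists_nat_ge t.
exists (B (maxn M N) i), (B (maxn M N)); split; first by apply/far_bracketed_B/leq_maxl.
split => //; apply: le_trans tN (le_trans _ (vsum_B_ge _)).
by rewrite ler_nat leq_maxr.
Qed.

Lemma lower_env_le M t i w : far_bracketed M w -> t <= vsum w -> lower_env M t i <= w i.
Proof. by move=> Mw tw; apply: (inf_le_mem (@lower_set_ge0 M t i)); exists w. Qed.

Lemma lower_env_ge M t i c :
  (forall w, far_bracketed M w -> t <= vsum w -> c <= w i) -> c <= lower_env M t i.
Proof.
move=> Hc; have [x Hx] := lower_set_nonempty M t i.
by apply: (lb_le_inf_mem Hx) => _ [w [Mw [tw ->]]]; exact: Hc.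
Qed.

Lemma lower_env_ge0 M t i : 0 <= lower_env M t i.
Proof. by apply: lower_env_ge => w /far_bracketed_decay[w0 _] _; exact: w0. Qed.

Lemma lower_env_decay M t : decay_point (fun i => lower_env M t i).
Proof.
apply: (decay_point_of_approx_above HG Krho (P := fun w => far_bracketed M w /\ t <= vsum w)).
- by move=> i; exact: lower_env_ge0.
- by move=> w [Mw tw]; split; [exact: far_bracketed_decay Mw | move=> i; exact: lower_env_le].
- move=> i e e0; have [x Hx] := lower_set_nonempty M t i.
  have [_ [[w [Mw [tw ->]]] lt]] := inf_adherent_mem Hx (@lower_set_ge0 M t i) e0.
  by exists w; split => //; apply/ltW.
Qed.

Lemma lower_env_mono_t M t t' i : t <= t' -> lower_env M t i <= lower_env M t' i.
Proof. by move=> tt'; apply: lower_env_ge => w Mw /(le_trans tt'); exact: lower_env_le. Qed.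

Lemma lower_env_mono_M M M' t i : (M <= M')%N -> lower_env M t i <= lower_env M' t i.
Proof.
move=> MM'; apply: lower_env_ge => w [m [M'm br]] tw; apply: lower_env_le => //.
by exists m; split => //; exact: leq_trans M'm.
Qed.

(* A witness for level [t] is pushed up to level [t + h] by [bracketed_step],
   moving each coordinate by at most [h]. *)
Lemma lower_env_lipschitz M t h i : 0 <= t -> 0 <= h -> t + h <= M%:R ->
  lower_env M (t + h) i <= lower_env M t i + h.
Proof.
move=> t0 h0 thM; rewrite -lerBlDr; apply: lower_env_ge => w Mw tw.
have [enough|short] := leP (t + h) (vsum w).
  by have := lower_env_le i Mw enough; lra.
case: Mw => m [Mm [k [lo hi]]].
pose h' := t + h - vsum w.
have h'_le : vsum w + h' <= vsum (B m).
  rewrite /h' addrC subrK; apply: le_trans thM (le_trans _ (vsum_B_ge m)).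
  by rewrite ler_nat.
have [|w' [br' _ w'_le w'_sum]] := bracketed_step (B_decay m) lo hi _ h'_le.
  by rewrite /h'; lra.
have Mw' : far_bracketed M w' by exists m.
have th_w' : t + h <= vsum w' by move: w'_sum; rewrite /h'; lra.
by have := lower_env_le i Mw' th_w'; have := w'_le i; rewrite /h'; lra.
Qed.

Lemma lower_env_at0 M i : lower_env M 0 i <= 0.
Proof.
apply/ler_addgt0Pr => e e0; rewrite add0r.
have [k Hk] := gain_orbit_vanishes HG Krho HN (B_decay M) e0.
apply: le_trans (Hk i); apply: lower_env_le.
  exists M; split => //; exists k; split => //.
  exact: (gain_orbit_nonincr HG Krho (B_decay M) (leqnSn k)).
exact/vsum_ge0/(gain_orbit_decay HG Krho k (B_decay M)).1.
Qed.

Lemma lower_env_le_t M t i : 0 <= t -> lower_env M t i <= t.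
Proof.
move=> t0; have [N tN] := exists_nat_ge t.
have tMN : 0 + t <= (maxn M N)%:R.
  by rewrite add0r; apply: le_trans tN _; rewrite ler_nat leq_maxr.
have := lower_env_lipschitz i (lexx 0) t0 tMN; rewrite add0r.
by have := lower_env_at0 (maxn M N) i; have := lower_env_mono_M t i (leq_maxl M N); lra.
Qed.

(* [lower_env M] is 1-Lipschitz only up to level [M%:R]; taking the supremum over
   [M] removes that restriction. *)
Definition decay_curve t i := sup [set x | exists M, x = lower_env M t i].

Lemma lower_env_le_curve M t i : 0 <= t -> lower_env M t i <= decay_curve t i.
Proof.
by move=> t0; apply: (sup_ge_mem (M := t)) => [_ [M' ->]|]; [exact: lower_env_le_t | exists M].
Qed.

Lemma decay_curve_le t i : 0 <= t -> decay_curve t i <= t.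
Proof.
move=> t0; apply: (sup_le_ub_mem (x := lower_env 0 t i)); first by exists 0%N.
by move=> _ [M' ->]; exact: lower_env_le_t.
Qed.

Lemma decay_curve_ge0 t i : 0 <= t -> 0 <= decay_curve t i.
Proof. by move=> t0; apply: le_trans (lower_env_ge0 0 t i) (lower_env_le_curve 0 i t0). Qed.

Lemma decay_curve_decay t : 0 <= t -> decay_point (decay_curve t).
Proof.
move=> t0; have X0 : nonneg (decay_curve t) by move=> i; exact: decay_curve_ge0.
split => //; apply: (Gam_rho_le_of_approx_below HG Krho X0) => d d0.
have [K HK] : exists K, forall i k', (K <= k')%N -> decay_curve t i - d < lower_env k' t i.
  apply: fin_eventually_nat => i.
  have E0 : [set x | exists M, x = lower_env M t i] (lower_env 0 t i) by exists 0%N.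
  have E_ub x : [set x | exists M, x = lower_env M t i] x -> x <= t.
    by case=> M ->; exact: lower_env_le_t.
  have [_ [[k ->] lt]] := sup_adherent_mem E0 E_ub d0.
  by exists k => k' kk'; apply: lt_le_trans lt _; exact: lower_env_mono_M.
exists (fun i => lower_env K t i); split=> [i|i|i|i]; first exact: lower_env_ge0.
- exact: lower_env_le_curve.
- exact: le_trans ((lower_env_decay K t).2 i) (lower_env_le_curve _ i t0).
- exact: HK.
Qed.

Lemma decay_curve_mono t t' i : 0 <= t -> t <= t' -> decay_curve t i <= decay_curve t' i.
Proof.
move=> t0 tt'; apply: (sup_le_ub_mem (x := lower_env 0 t i)); first by exists 0%N.
move=> _ [M ->]; apply: le_trans (lower_env_mono_t M i tt') (lower_env_le_curve _ _ _).
exact: le_trans tt'.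
Qed.

Lemma decay_curve_lipschitz t h i : 0 <= t -> 0 <= h ->
  decay_curve (t + h) i <= decay_curve t i + h.
Proof.
move=> t0 h0; apply: (sup_le_ub_mem (x := lower_env 0 (t + h) i)); first by exists 0%N.
move=> _ [M ->]; have [N thN] := exists_nat_ge (t + h).
apply: le_trans (lower_env_mono_M (t + h) i (leq_maxl M N)) _.
apply: le_trans (lower_env_lipschitz i t0 h0 _) _.
  by apply: le_trans thN _; rewrite ler_nat leq_maxr.
by rewrite lerD2r; exact: lower_env_le_curve.
Qed.

Lemma decay_curve_lb t i c : 0 <= t ->
  (forall z, decay_point z -> t <= vsum z -> c <= z i) -> c <= decay_curve t i.
Proof.
move=> t0 Hc; apply: le_trans (lower_env_le_curve 0 i t0).
by apply: lower_env_ge => w /far_bracketed_decay; exact: Hc.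
Qed.

Lemma decay_curve0 : decay_curve 0 = fun _ => 0.
Proof. by apply: funext => i; apply/eqP; rewrite eq_le decay_curve_le ?decay_curve_ge0. Qed.

End DecayCurve.

(** * From the curve to a path of strict decay *)

Section Damping.
Variable R : realType.
Implicit Types (x y u : R).

Definition sat u := u / (1 + u).

Lemma sat_ge0 u : 0 <= u -> 0 <= sat u.
Proof. by move=> u0; apply: divr_ge0 => //; lra. Qed.

Lemma sat_le1 u : 0 <= u -> sat u <= 1.
Proof. by move=> u0; rewrite /sat ler_pdivrMr; lra. Qed.

Lemma satB x y : 0 <= x -> 0 <= y -> sat y - sat x = (y - x) / ((1 + x) * (1 + y)).
Proof.
move=> x0 y0; have x1 : 1 + x != 0 by rewrite gt_eqF //; lra.
have y1 : 1 + y != 0 by rewrite gt_eqF //; lra.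
by rewrite /sat; field; rewrite x1 y1.
Qed.

Lemma satB_le x y : 0 <= x -> x <= y -> sat y - sat x <= y - x.
Proof.
move=> x0 xy; rewrite satB //; last lra.
rewrite ler_pdivrMr; last by apply: mulr_gt0; lra.
have : 1 <= (1 + x) * (1 + y) by nra.
nra.
Qed.

Lemma satB_ge x y : 0 <= x -> x <= y -> (y - x) / ((1 + y) * (1 + y)) <= sat y - sat x.
Proof.
move=> x0 xy; rewrite satB //; last lra.
apply: ler_wpM2l; first lra.
by rewrite lef_pV2 ?posrE; [apply: ler_wpM2r; lra | apply: mulr_gt0; lra..].
Qed.

Lemma sat_lt x y : 0 <= x -> x < y -> sat x < sat y.
Proof.
move=> x0 xy; have := satB_ge x0 (ltW xy).
have : 0 < (y - x) / ((1 + y) * (1 + y)) by apply: divr_gt0; [lra | apply: mulr_gt0; lra].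
lra.
Qed.

Variable b : R -> R.
Hypothesis b_ge0 : forall u, 0 <= u -> 0 <= b u.
Hypothesis b_mono : forall u u', 0 <= u -> u <= u' -> b u <= b u'.
Hypothesis b_lipschitz : forall u u', 0 <= u -> u <= u' -> b u' - b u <= u' - u.
Hypothesis b_le : forall u, 0 <= u -> b u <= u.
Hypothesis b_pos : forall u, 0 < u -> 0 < b u.
Hypothesis b_unbounded : forall M, exists2 u, 0 <= u & M <= b u.

(* [b] is only nondecreasing; the factor [sat u] makes [damped] strictly increasing
   with the explicit slope of [damped_lo], at the price of halving the argument. *)
Definition damped u := b (u / 2) * sat u.

Lemma damped0 : damped 0 = 0. Proof. by rewrite /damped /sat !mul0r mulr0. Qed.

Lemma damped_ge0 u : 0 <= u -> 0 <= damped u.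
Proof. by move=> u0; apply: mulr_ge0; [apply: b_ge0; lra | exact: sat_ge0]. Qed.

Lemma damped_le u : 0 <= u -> damped u <= b u.
Proof.
move=> u0; apply: le_trans (_ : b (u / 2) <= _); last by apply: b_mono; lra.
rewrite /damped -[X in _ <= X]mulr1; apply: ler_wpM2l; [apply: b_ge0; lra | exact: sat_le1].
Qed.

Lemma damped_up x y : 0 <= x -> x <= y -> damped y - damped x <= (y - x) * (1 + y).
Proof.
move=> x0 xy; have x2 : 0 <= x / 2 by lra.
have xy2 : x / 2 <= y / 2 by lra.
have := b_lipschitz x2 xy2; have := satB_le x0 xy; have := b_le x2; have := b_ge0 x2.
have := sat_le1 (le_trans x0 xy); have := sat_ge0 (le_trans x0 xy); have := sat_ge0 x0.
by have := b_mono x2 xy2; rewrite /damped; nra.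
Qed.

Lemma damped_lo x y : 0 <= x -> x <= y ->
  b (x / 2) * ((y - x) / ((1 + y) * (1 + y))) <= damped y - damped x.
Proof.
move=> x0 xy; have x2 : 0 <= x / 2 by lra.
have xy2 : x / 2 <= y / 2 by lra.
have := satB_ge x0 xy; have := b_ge0 x2; have := sat_ge0 (le_trans x0 xy).
by have := b_mono x2 xy2; rewrite /damped; nra.
Qed.

Lemma damped_lt x y : 0 <= x -> x < y -> damped x < damped y.
Proof.
move=> x0 xy; have x2 : 0 <= x / 2 by lra.
have xy2 : x / 2 <= y / 2 by lra.
have y2 : 0 < y / 2 by lra.
have := sat_lt x0 xy; have := b_ge0 x2; have := sat_ge0 x0; have := b_pos y2.
by have := b_mono x2 xy2; rewrite /damped; nra.
Qed.

Lemma damped_unbounded M : exists2 x, 0 <= x & M <= damped x.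
Proof.
have [u u0 Mu] := b_unbounded (3 * M).
exists (2 * u + 2); rewrite /damped; first lra.
have -> : (2 * u + 2) / 2 = u + 1 by field.
have : 2 / 3 <= sat (2 * u + 2) by rewrite /sat ler_pdivlMr; lra.
have u1 : u <= u + 1 by lra.
by have := b_mono u0 u1; have := b_ge0 u0; nra.
Qed.

Lemma Kinf_damped : Kinf damped.
Proof.
apply: (@Kinf_locally_lipschitz _ _ 1) => //; first exact: damped0.
- by move=> x y x0 xy; exact: damped_lt.
- by move=> x y x0 xy; exact: damped_up.
- exact: damped_unbounded.
Qed.

End Damping.

Section CompactPos.
Local Open Scope classical_set_scope.

Lemma compact_pos_bounds (R : realType) (K : set R) :
  compact K -> K `<=` `]0, +oo[ -> K !=set0 ->
  exists a b, 0 < a /\ forall r, K r -> a <= r <= b.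
Proof.
move=> cK K_pos K0.
have cid : {within K, continuous (fun x : R => x)}.
  by apply: continuous_subspaceT => x; exact: cvg_id.
have [a aK Ha] := compact_EVT_min K0 cK cid.
have [b bK Hb] := compact_EVT_max K0 cK cid.
exists a, b; split; first by have := K_pos a (set_mem aK); rewrite /= in_itv /= andbT.
by move=> r Kr; rewrite Ha ?Hb //; exact: mem_set.
Qed.

End CompactPos.

Lemma bilipschitz_of_increments (R : realType) (f : R -> R) (a b c C : R) :
  0 < c -> 0 < C ->
  (forall t1 t2, a <= t1 -> t1 <= t2 -> t2 <= b ->
     c * (t2 - t1) <= f t2 - f t1 <= C * (t2 - t1)) ->
  forall t1 t2, a <= t1 <= b -> a <= t2 <= b ->
  C^-1 * `|f t1 - f t2| <= `|t1 - t2| <= c^-1 * `|f t1 - f t2|.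
Proof.
move=> c0 C0 incr.
have bounds t1 t2 : a <= t1 -> t1 <= t2 -> t2 <= b ->
    [/\ f t1 <= f t2, C^-1 * (f t2 - f t1) <= t2 - t1 & t2 - t1 <= c^-1 * (f t2 - f t1)].
  move=> a1 t12 b2; have /andP[lo up] := incr t1 t2 a1 t12 b2.
  have : 0 <= c * (t2 - t1) by apply: mulr_ge0; lra.
  by split; [lra | rewrite mulrC ler_pdivrMr // mulrC | rewrite mulrC ler_pdivlMr // mulrC].
move=> t1 t2 /andP[a1 b1] /andP[a2 b2]; have [t12|/ltW t21] := leP t1 t2.
  have [f12 lo up] := bounds t1 t2 a1 t12 b2.
  by rewrite distrC [`|t1 - _|]distrC !ger0_norm ?subr_ge0 // lo up.
have [f21 lo up] := bounds t2 t1 a2 t21 b1.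
by rewrite !ger0_norm ?subr_ge0 // lo up.
Qed.

Section PathFromCurve.
Local Open Scope classical_set_scope.
Variables (R : realType) (I : finType) (i0 : I) (Ii : I -> {set I})
  (gamma : I -> I -> R -> R) (mu : I -> (I -> R) -> \bar R).
Hypothesis HG : is_gain_operator Ii gamma mu.
Variable rho : R -> R.
Hypothesis Krho : Kinf rho.
Variable xi : R -> R.
Hypothesis Kxi : Kinf xi.
Hypothesis Hxi : forall s i j, nonneg s -> j \in Ii i ->
  xi (gamma i j (s j)) <= Gam Ii gamma mu s i.
Hypothesis has_in_edge : forall i, exists j, j \in Ii i.

Local Notation G := (Gam Ii gamma mu).
Local Notation decay_point := (decay_point Ii gamma mu rho).

Variable X : R -> I -> R.
Hypothesis X_decay : forall t, 0 <= t -> decay_point (X t).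
Hypothesis X_mono : forall t t' i, 0 <= t -> t <= t' -> X t i <= X t' i.
Hypothesis X_lipschitz : forall t h i, 0 <= t -> 0 <= h -> X (t + h) i <= X t i + h.
Hypothesis X_le : forall t i, 0 <= t -> X t i <= t.
Hypothesis X0 : X 0 = fun _ => 0.
Hypothesis X_pos : forall t i, 0 < t -> 0 < X t i.
Hypothesis X_unbounded : forall i M, exists2 t, 0 <= t & M <= X t i.

Definition half_rho (x : R) := rho x / 2.

Lemma Kinf_half_rho : Kinf half_rho. Proof. exact: Kinf_half. Qed.

Local Notation T2 := (Gam_rho Ii gamma mu half_rho).

Definition curve_gain t i := T2 (X t) i.
Definition curve_margin t i := half_rho (G (X t) i).
Definition curve_param t := t + vsum (fun i => curve_gain t i + curve_margin t i).

Lemma curve_nonneg t : 0 <= t -> nonneg (X t). Proof. by case/X_decay. Qed.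

Lemma curve_dist t t' i : 0 <= t -> 0 <= t' -> `|X t i - X t' i| <= `|t - t'|.
Proof.
move=> t0 t'0; have [tt'|t't] := leP t t'.
- have h0 : 0 <= t' - t by lra.
  have := X_lipschitz i t0 h0; rewrite addrC subrK => up.
  have lo := X_mono i t0 tt'.
  by rewrite distrC [`|t - _|]distrC !ger0_norm; lra.
- have h0 : 0 <= t - t' by lra.
  have := X_lipschitz i t'0 h0; rewrite addrC subrK => up.
  have lo := X_mono i t'0 (ltW t't).
  by rewrite !ger0_norm; lra.
Qed.

Lemma curve_gainE t i : curve_gain t i = G (X t) i + curve_margin t i. Proof. by []. Qed.

Lemma curve_Gam_ge0 t i : 0 <= t -> 0 <= G (X t) i.
Proof. by move=> t0; exact: (Gam_ge0 HG i (curve_nonneg t0)). Qed.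

Lemma curve_margin_ge0 t i : 0 <= t -> 0 <= curve_margin t i.
Proof. by move=> t0; apply/(Kinf_ge0 Kinf_half_rho)/curve_Gam_ge0. Qed.

Lemma curve_gain_ge0 t i : 0 <= t -> 0 <= curve_gain t i.
Proof.
by move=> t0; rewrite curve_gainE; have := curve_Gam_ge0 i t0; have := curve_margin_ge0 i t0; lra.
Qed.

Lemma curve_Gam_mono t t' i : 0 <= t -> t <= t' -> G (X t) i <= G (X t') i.
Proof. by move=> t0 tt'; apply: (Gam_mono HG (curve_nonneg t0)) => j; exact: X_mono. Qed.

Lemma curve_margin_mono t t' i : 0 <= t -> t <= t' -> curve_margin t i <= curve_margin t' i.
Proof.
by move=> t0 tt'; apply: (Kinf_le Kinf_half_rho); [exact: curve_Gam_ge0 | exact: curve_Gam_mono].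
Qed.

Lemma curve_gain_mono t t' i : 0 <= t -> t <= t' -> curve_gain t i <= curve_gain t' i.
Proof.
move=> t0 tt'; rewrite !curve_gainE.
by have := curve_Gam_mono i t0 tt'; have := curve_margin_mono i t0 tt'; lra.
Qed.

(* [T_rho = T2 + half_rho o Gam], and [X t] is a decay point for [T_rho]. *)
Lemma curve_gain_margin_le t i : 0 <= t -> curve_gain t i + curve_margin t i <= X t i.
Proof.
move=> t0; apply: le_trans ((X_decay t0).2 i).
by rewrite curve_gainE Gam_rhoE /curve_margin /half_rho; lra.
Qed.

Lemma curve_param_increments t t' i : 0 <= t -> t <= t' ->
  [/\ t' - t <= curve_param t' - curve_param t,
      curve_gain t' i - curve_gain t i <= curve_param t' - curve_param t &
      curve_margin t' i - curve_margin t i <= curve_param t' - curve_param t].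
Proof.
move=> t0 tt'.
have mono : vle (fun i => curve_gain t i + curve_margin t i)
                (fun i => curve_gain t' i + curve_margin t' i).
  by move=> j; have := curve_gain_mono j t0 tt'; have := curve_margin_mono j t0 tt'; lra.
have := ler_vsum mono; have := ler_coord_vsumB i mono => /= coord sum.
have := curve_gain_mono i t0 tt'; have := curve_margin_mono i t0 tt' => gain margin.
by rewrite /curve_param; split; lra.
Qed.

Lemma curve_param0 : curve_param 0 = 0.
Proof.
rewrite /curve_param add0r /vsum big1 // => i _.
have rho0 : rho 0 = 0 by case: Krho.
by rewrite curve_gainE /curve_margin X0 (Gam0 HG) /half_rho rho0 mul0r !addr0.
Qed.

Lemma curve_param_ge_margin t : 0 <= t -> t + curve_margin t i0 <= curve_param t.
Proof.
move=> t0; rewrite /curve_param lerD2l.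
apply: le_trans (vsum_ge_coord i0 _); first by rewrite lerDr; exact: curve_gain_ge0.
by move=> j; have := curve_gain_ge0 j t0; have := curve_margin_ge0 j t0; lra.
Qed.

Lemma curve_param_ge t : 0 <= t -> t <= curve_param t.
Proof. by move=> t0; have := curve_param_ge_margin t0; have := curve_margin_ge0 i0 t0; lra. Qed.

Lemma curve_param_cont t e : 0 <= t -> 0 < e -> exists2 d, 0 < d &
  forall t', 0 <= t' -> `|t - t'| < d -> `|curve_param t - curve_param t'| < e.
Proof.
move=> t0 e0; pose n : R := #|I|%:R; have n0 : 0 <= n by rewrite /n ler0n.
pose e1 := e / (8 * n + 8); have e10 : 0 < e1 by apply: divr_gt0; lra.
have e1E : e1 * (8 * n + 8) = e by rewrite /e1 divfK // gt_eqF //; lra.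
have [d1 d10 Hd1] := Gam_rho_cont HG Kinf_half_rho (curve_nonneg t0) e10.
have [d2 d20 Hd2] := Gam_cont HG (curve_nonneg t0) e10.
have dm0 : 0 < Num.min (Num.min d1 d2) (e / 2) by rewrite !lt_min d10 d20 /=; lra.
exists (Num.min (Num.min d1 d2) (e / 2)) => // t' t'0.
rewrite !lt_min => /andP[/andP[td1 td2] te].
have close j : `|X t j - X t' j| < d1 /\ `|X t j - X t' j| < d2.
  by have := curve_dist j t0 t'0; split; lra.
have HT := Hd1 (X t') (curve_nonneg t'0) (fun j => (close j).1).
have HGd := Hd2 (X t') (curve_nonneg t'0) (fun j => (close j).2).
have : `|vsum (fun i => curve_gain t i + curve_margin t i) -
         vsum (fun i => curve_gain t' i + curve_margin t' i)| <= n * (3 * e1).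
  apply: ler_vsum_dist => i.
  have /ltr_distlC_and [a1 a2] := HT i; have /ltr_distlC_and [b1 b2] := HGd i.
  rewrite !Gam_rhoE in a1 a2; rewrite !curve_gainE /curve_margin.
  by apply/ler_distlC_and; rewrite /half_rho in a1 a2 *; split; lra.
move=> /ler_distlC_and [s1 s2]; move/ltr_distlC_and: te => [c1 c2].
rewrite /curve_param; apply/ltr_distlC_and.
have : n * e1 * 8 <= e by nra.
by split; nra.
Qed.

Definition param_inv u := sup [set t | 0 <= t /\ curve_param t <= u].

Lemma param_inv_set_ub u t : [set t | 0 <= t /\ curve_param t <= u] t -> t <= u.
Proof. by case=> t0; apply: le_trans (curve_param_ge t0). Qed.

Lemma param_inv_set0 u : 0 <= u -> [set t | 0 <= t /\ curve_param t <= u] 0.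
Proof. by move=> u0; split; rewrite ?curve_param0. Qed.

Lemma param_inv_ge u t : 0 <= t -> curve_param t <= u -> t <= param_inv u.
Proof. by move=> t0 tu; apply: (sup_ge_mem (@param_inv_set_ub u)). Qed.

Lemma param_inv_ge0 u : 0 <= u -> 0 <= param_inv u.
Proof. by move=> u0; apply: param_inv_ge; rewrite ?curve_param0. Qed.

Lemma param_inv_le u : 0 <= u -> param_inv u <= u.
Proof. by move=> u0; apply: sup_le_ub_mem (param_inv_set0 u0) (@param_inv_set_ub u). Qed.

Lemma curve_param_inv u : 0 <= u -> curve_param (param_inv u) = u.
Proof.
move=> u0; have ta0 := param_inv_ge0 u0.
apply/eqP; rewrite eq_le; apply/andP; split.
- apply/ler_addgt0Pr => e e0; have [d d0 Hd] := curve_param_cont ta0 e0.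
  have [t [[t0 tu] t_gt]] := sup_adherent_mem (param_inv_set0 u0) (@param_inv_set_ub u) d0.
  have t_le : t <= param_inv u by apply: param_inv_ge.
  rewrite -/(param_inv u) in t_gt.
  have close : `|param_inv u - t| < d by apply/ltr_distlC_and; split; lra.
  by have /ltr_distlC_and := Hd t t0 close; lra.
- rewrite leNgt; apply/negP => lt_u; have e0 : 0 < u - curve_param (param_inv u) by lra.
  have [d d0 Hd] := curve_param_cont ta0 e0.
  have t0 : 0 <= param_inv u + d / 2 by lra.
  have close : `|param_inv u - (param_inv u + d / 2)| < d by apply/ltr_distlC_and; split; lra.
  have /ltr_distlC_and := Hd _ t0 close => -[_ le_u].
  have le_u' : curve_param (param_inv u + d / 2) <= u by lra.
  by have := param_inv_ge t0 le_u'; lra.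
Qed.

Lemma param_inv_mono u u' : 0 <= u -> u <= u' -> param_inv u <= param_inv u'.
Proof.
move=> u0 uu'; apply: param_inv_ge; first exact: param_inv_ge0.
by rewrite curve_param_inv //; lra.
Qed.

Lemma param_inv_increments u u' i : 0 <= u -> u <= u' ->
  [/\ param_inv u' - param_inv u <= u' - u,
      curve_gain (param_inv u') i - curve_gain (param_inv u) i <= u' - u &
      curve_margin (param_inv u') i - curve_margin (param_inv u) i <= u' - u].
Proof.
move=> u0 uu'; have := curve_param_increments i (param_inv_ge0 u0) (param_inv_mono u0 uu').
by rewrite !curve_param_inv //; lra.
Qed.

Lemma param_inv0 : param_inv 0 = 0.
Proof. by apply/eqP; rewrite eq_le param_inv_le ?param_inv_ge0 ?lexx. Qed.

Lemma param_inv_pos u : 0 < u -> 0 < param_inv u.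
Proof.
move=> u0; rewrite lt_neqAle param_inv_ge0 ?andbT; last lra.
by apply/eqP => pi0; have := curve_param_inv (ltW u0); rewrite -pi0 curve_param0; lra.
Qed.

Definition margin_min u :=
  \big[Num.min/curve_margin (param_inv u) i0]_i curve_margin (param_inv u) i.

Lemma margin_min_le u i : margin_min u <= curve_margin (param_inv u) i.
Proof. exact: bigmin_le. Qed.

Lemma margin_min_ge c u : (forall i, c <= curve_margin (param_inv u) i) -> c <= margin_min u.
Proof. by move=> c_le; apply: le_bigmin. Qed.

Lemma margin_min_ge0 u : 0 <= u -> 0 <= margin_min u.
Proof. by move=> u0; apply: margin_min_ge => i; apply/curve_margin_ge0/param_inv_ge0. Qed.

Lemma margin_min_mono u u' : 0 <= u -> u <= u' -> margin_min u <= margin_min u'.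
Proof.
move=> u0 uu'; apply: margin_min_ge => i; apply: le_trans (margin_min_le u i) _.
by apply: curve_margin_mono; [exact: param_inv_ge0 | exact: param_inv_mono].
Qed.

Lemma margin_min_lipschitz u u' : 0 <= u -> u <= u' -> margin_min u' - margin_min u <= u' - u.
Proof.
move=> u0 uu'; rewrite lerBlDr addrC -lerBlDr; apply: margin_min_ge => i.
by have [_ _ inc] := param_inv_increments i u0 uu'; have := margin_min_le u' i; lra.
Qed.

Lemma margin_min_le_id u : 0 <= u -> margin_min u <= u.
Proof.
move=> u0; apply: le_trans (margin_min_le u i0) _.
have := curve_param_ge_margin (param_inv_ge0 u0); rewrite curve_param_inv //.
by have := param_inv_ge0 u0; lra.
Qed.

Lemma curve_margin_pos t i : 0 < t -> 0 < curve_margin t i.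
Proof.
move=> t0; have [j ji] := has_in_edge i; apply: (Kinf_gt0 Kinf_half_rho).
apply: lt_le_trans (Hxi (curve_nonneg (ltW t0)) ji).
by apply/(Kinf_gt0 Kxi)/(Kinf_gt0 (gain_Kinf HG ji))/X_pos.
Qed.

Lemma margin_min_pos u : 0 < u -> 0 < margin_min u.
Proof.
move=> u0; rewrite /margin_min; elim/big_ind: _ => [|a b a0 b0|i _].
- exact/curve_margin_pos/param_inv_pos.
- by rewrite lt_min a0 b0.
- exact/curve_margin_pos/param_inv_pos.
Qed.

Lemma curve_margin_unbounded i M : exists r, forall t, r <= t -> M <= curve_margin t i.
Proof.
have [j ji] := has_in_edge i; have Kgij := gain_Kinf HG ji.
have [y y0 My] := Kinf_unbounded M (Kinf_comp Kinf_half_rho (Kinf_comp Kxi Kgij)).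
have [t t0 yt] := X_unbounded j y.
exists t => t' tt'; apply: le_trans My (le_trans _ (curve_margin_mono i t0 tt')).
apply: (Kinf_le Kinf_half_rho); first exact/(Kinf_ge0 Kxi)/(Kinf_ge0 Kgij).
apply: le_trans (Hxi (curve_nonneg t0) ji); apply: (Kinf_le Kxi); first exact: Kinf_ge0.
exact: Kinf_le.
Qed.

Lemma margin_min_unbounded M : exists2 u, 0 <= u & M <= margin_min u.
Proof.
have [r Hr] := fin_eventually (fun i => curve_margin_unbounded i M).
have t0 : 0 <= Num.max r 0 by rewrite le_max lexx orbT.
exists (curve_param (Num.max r 0)); first exact: le_trans (curve_param_ge t0).
apply: margin_min_ge => i; apply: Hr; apply: le_trans (param_inv_ge t0 (lexx _)).
by rewrite le_max lexx.
Qed.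

Local Notation damped_margin := (damped margin_min).

Lemma Kinf_damped_margin : Kinf damped_margin.
Proof.
exact: (Kinf_damped margin_min_ge0 margin_min_mono margin_min_lipschitz margin_min_le_id
  margin_min_pos margin_min_unbounded).
Qed.

(* Adding the K_infty term [damped_margin] makes every coordinate strictly
   increasing; it fits below [X] because [damped_margin <= margin_min]. *)
Definition decay_path u i := curve_gain (param_inv u) i + damped_margin u.

Lemma damped_margin_ge0 u : 0 <= u -> 0 <= damped_margin u.
Proof. exact: damped_ge0 margin_min_ge0 u. Qed.

Lemma decay_path_ge u i : 0 <= u -> damped_margin u <= decay_path u i.
Proof. by move=> u0; rewrite /decay_path lerDr; apply/curve_gain_ge0/param_inv_ge0. Qed.

Lemma decay_path_le_curve u i : 0 <= u -> decay_path u i <= X (param_inv u) i.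
Proof.
move=> u0; have := curve_gain_margin_le i (param_inv_ge0 u0).
have := damped_le margin_min_ge0 margin_min_mono u0.
by have := margin_min_le u i; rewrite /decay_path; lra.
Qed.

Lemma decay_path_le u i : 0 <= u -> decay_path u i <= u.
Proof.
move=> u0; apply: le_trans (decay_path_le_curve i u0) _.
exact: le_trans (X_le i (param_inv_ge0 u0)) (param_inv_le u0).
Qed.

Lemma decay_path_lipschitz x y i : 0 <= x -> x <= y ->
  decay_path y i - decay_path x i <= (y - x) * (2 + y).
Proof.
move=> x0 xy; have [_ inc _] := param_inv_increments i x0 xy.
have := damped_up margin_min_ge0 margin_min_mono margin_min_lipschitz margin_min_le_id x0 xy.
by rewrite /decay_path; nra.
Qed.

Lemma decay_path_lt x y i : 0 <= x -> x < y -> decay_path x i < decay_path y i.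
Proof.
move=> x0 xy; have := curve_gain_mono i (param_inv_ge0 x0) (param_inv_mono x0 (ltW xy)).
have := damped_lt margin_min_ge0 margin_min_mono margin_min_pos x0 xy.
by rewrite /decay_path; lra.
Qed.

Lemma decay_path0 i : decay_path 0 i = 0.
Proof.
rewrite /decay_path param_inv0 damped0 addr0 /curve_gain X0.
exact: (Gam_rho0 HG Kinf_half_rho).
Qed.

Lemma Kinf_decay_path i : Kinf (fun u => decay_path u i).
Proof.
apply: (@Kinf_locally_lipschitz _ _ 2) => //.
- exact: decay_path0.
- by move=> x y x0 xy; exact: decay_path_lt.
- by move=> x y x0 xy; exact: decay_path_lipschitz.
- move=> M; have [x x0 Mx] := Kinf_unbounded M Kinf_damped_margin.
  by exists x => //; apply: le_trans Mx (decay_path_ge i x0).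
Qed.

Lemma decay_path_decay u : 0 <= u -> vle (T2 (decay_path u)) (decay_path u).
Proof.
move=> u0 i; have path0 : nonneg (decay_path u).
  by move=> j; apply: le_trans (damped_margin_ge0 u0) (decay_path_ge j u0).
have := Gam_rho_mono HG Kinf_half_rho path0 (fun j => decay_path_le_curve j u0) i.
by move/le_trans; apply; rewrite /decay_path lerDl; exact: damped_margin_ge0.
Qed.

Lemma decay_path_increments a tb i t1 t2 : 0 < a -> a <= t1 -> t1 <= t2 -> t2 <= tb ->
  margin_min (a / 2) / ((1 + tb) * (1 + tb)) * (t2 - t1)
    <= decay_path t2 i - decay_path t1 i <= (2 + tb) * (t2 - t1).
Proof.
move=> a0 a1 t12 t2b; have t10 : 0 <= t1 by lra.
apply/andP; split.
- have lo := damped_lo margin_min_ge0 margin_min_mono t10 t12.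
  have := curve_gain_mono i (param_inv_ge0 t10) (param_inv_mono t10 t12).
  suff : margin_min (a / 2) / ((1 + tb) * (1 + tb)) * (t2 - t1)
      <= margin_min (t1 / 2) * ((t2 - t1) / ((1 + t2) * (1 + t2))) by rewrite /decay_path; lra.
  rewrite mulrAC -mulrA; apply: ler_pM.
  + by apply: margin_min_ge0; lra.
  + by apply: mulr_ge0; [lra | rewrite invr_ge0; apply: mulr_ge0; lra].
  + by apply: margin_min_mono; lra.
  + apply: ler_wpM2l; first lra.
    by rewrite lef_pV2 ?posrE; [apply: ler_pM; lra | apply: mulr_gt0; lra..].
- have := decay_path_lipschitz i t10 t12.
  have : (t2 - t1) * (2 + t2) <= (t2 - t1) * (2 + tb) by apply: ler_wpM2l; lra.
  lra.
Qed.

(* A level [r] of a compact [K] in [(0, oo)] is reached only at parameters in a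
   fixed interval [[a, tb]], on which [decay_path_increments] applies. *)
Lemma decay_path_bilipschitz (K : set R) : compact K -> K `<=` `]0, +oo[ ->
  exists l L, [/\ 0 < l, l <= L &
    forall i r1 r2 t1 t2, K r1 -> K r2 -> 0 <= t1 -> 0 <= t2 ->
      decay_path t1 i = r1 -> decay_path t2 i = r2 ->
      l * `|r1 - r2| <= `|t1 - t2| <= L * `|r1 - r2|].
Proof.
move=> cK K_pos; have [K0|K0] := pselect (K !=set0); last first.
  by exists 1, 1; split => // i r1 *; exfalso; apply: K0; exists r1.
have [a [b [a0 Kab]]] := compact_pos_bounds cK K_pos K0.
have [tb tb0 btb] := Kinf_unbounded (b + 1) Kinf_damped_margin.
have range i t r : K r -> 0 <= t -> decay_path t i = r -> a <= t <= tb.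
  move=> Kr t0 tr; have /andP[ar rb] := Kab r Kr; apply/andP; split.
    by apply: le_trans ar _; rewrite -tr; exact: decay_path_le.
  apply/ltW/(Kinf_lt_inv Kinf_damped_margin tb0 _ t0).
  by apply: le_lt_trans (decay_path_ge i t0) _; rewrite tr; lra.
have atb : a <= tb.
  have [r /Kab/andP[ar rb]] := K0.
  by have := decay_path_ge i0 tb0; have := decay_path_le i0 tb0; lra.
pose c := margin_min (a / 2) / ((1 + tb) * (1 + tb)).
have c0 : 0 < c by apply: divr_gt0; [apply: margin_min_pos; lra | apply: mulr_gt0; lra].
have C0 : 0 < 2 + tb by lra.
exists (2 + tb)^-1, (Num.max c^-1 (2 + tb)^-1); split; rewrite ?invr_gt0 ?le_max ?lexx ?orbT //.
move=> i r1 r2 t1 t2 K1 K2 t10 t20 e1 e2.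
have /andP[lo up] := bilipschitz_of_increments (f := fun t => decay_path t i) c0 C0
  (fun t1 t2 => decay_path_increments i a0) (range i t1 r1 K1 t10 e1) (range i t2 r2 K2 t20 e2).
rewrite -e1 -e2 lo /=; apply: le_trans up _.
by apply: ler_wpM2r; rewrite ?le_max ?lexx.
Qed.

Lemma path_of_decay_curve : exists sigma, path_of_strict_decay Ii gamma mu sigma.
Proof.
exists decay_path; split.
- by exists half_rho; split; [exact: Kinf_half_rho | exact: decay_path_decay].
- exists damped_margin, id; split; [exact: Kinf_damped_margin | exact: Kinf_id |].
  by move=> r r0 i; rewrite decay_path_ge ?decay_path_le.
- exact: Kinf_decay_path.
- exact: decay_path_bilipschitz.
Qed.

End PathFromCurve.

Section PathOfNJI.
Variables (R : realType) (I : finType) (i0 : I) (Ii : I -> {set I})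
  (gamma : I -> I -> R -> R) (mu : I -> (I -> R) -> \bar R).
Hypothesis HG : is_gain_operator Ii gamma mu.
Hypothesis HSC : strongly_connected Ii.

Lemma path_of_strict_decay_of_NJI rho : Kinf rho -> NJI (Gam_rho Ii gamma mu rho) ->
  (forall i, exists j, j \in Ii i) ->
  exists sigma, path_of_strict_decay Ii gamma mu sigma.
Proof.
move=> Krho HN has_in_edge; have [xi Kxi Hxi] := Gam_ge_edge HG.
have /choice [B HB] : forall m : nat, exists v,
    decay_point Ii gamma mu rho v /\ forall i, m.+1%:R <= v i.
  by move=> m; apply: (decay_point_above i0 HG HSC Krho HN Kxi Hxi); rewrite ltr0Sn.
have B_decay m := (HB m).1.
have B_ge m i : m%:R <= B m i by apply: le_trans ((HB m).2 i); rewrite ler_nat.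
apply: (path_of_decay_curve i0 HG Krho Kxi Hxi has_in_edge
  (X := decay_curve Ii gamma mu rho B)).
- exact: (decay_curve_decay i0 HG Krho HN B_decay B_ge).
- exact: (decay_curve_mono i0 HG Krho HN B_decay B_ge).
- exact: (decay_curve_lipschitz i0 HG Krho HN B_decay B_ge).
- exact: (decay_curve_le i0 HG Krho HN B_decay B_ge).
- exact: (decay_curve0 i0 HG Krho HN B_decay B_ge).
- move=> t i t0; have [c c0 Hc] := decay_coord_pos i0 HG HSC Krho Kxi Hxi i t0.
  apply: lt_le_trans c0 _; apply: (decay_curve_lb i0 HG Krho HN B_decay B_ge (ltW t0)).
  exact: Hc.
- move=> i M; have [t Ht] := decay_coord_unbounded i0 HG HSC Krho Kxi Hxi i M.
  have t0 : 0 <= Num.max t 0 by rewrite le_max lexx orbT.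
  exists (Num.max t 0) => //; apply: (decay_curve_lb i0 HG Krho HN B_decay B_ge t0).
  by move=> z z_dec tz; apply: (Ht z z_dec); apply: le_trans tz; rewrite le_max lexx.
Qed.

(* A vertex without in-neighbours can be reached from every vertex only if it is
   the only vertex; then [Gam] vanishes and [sigma r = r 1] works. *)
Lemma path_of_strict_decay_no_in_edge : ~ (forall i, exists j, j \in Ii i) ->
  exists sigma, path_of_strict_decay Ii gamma mu sigma.
Proof.
move=> no_in; have [i1 i1_in] : exists i1, forall j, j \notin Ii i1.
  apply: contrapT => all_in; apply: no_in => i; apply: contrapT => i_in.
  by apply: all_in; exists i => j; apply/negP => ji; apply: i_in; exists j.
have single k : k = i1.
  have /connectP [p p_path i1_last] := HSC k i1.
  case/lastP: p p_path i1_last => [|p a] // /[swap]; rewrite rcons_path last_rcons => <-.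
  by rewrite (negbTE (i1_in _)) andbF.
have Gam_eq0 s k : Gam Ii gamma mu s k = 0.
  rewrite -(Gam0 HG k) !Gam_gain_arg; congr (fine (mu k _)); apply: funext => j.
  by rewrite /gain_arg (single k) (negbTE (i1_in j)).
exists (fun r _ => r); split.
- exists id; split=> [|r r0 i]; first exact: Kinf_id.
  by rewrite /Gam_rho Gam_eq0 addr0.
- by exists id, id; split; [exact: Kinf_id | exact: Kinf_id | move=> r r0 i; rewrite lexx].
- by move=> i; exact: Kinf_id.
- by move=> K _ _; exists 1, 1; split=> // i r1 r2 t1 t2 _ _ _ _ <- <-; rewrite !mul1r lexx.
Qed.

End PathOfNJI.

Unset Implicit Arguments. Set Strict Implicit. Set Printing Implicit Defensive.

Theorem theorem4p13 (R : realType) (I : finType) (i0 : I)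
    (Ii : I -> {set I}) (gamma : I -> I -> R -> R)
    (mu : I -> (I -> R) -> \bar R) :
  is_gain_operator Ii gamma mu ->
  strongly_connected Ii ->
  (exists sigma : R -> I -> R, path_of_strict_decay Ii gamma mu sigma) <->
  (exists rho : R -> R, Kinf rho /\ NJI (Gam_rho Ii gamma mu rho)).
Proof.
move=> HG HSC; split; first exact: NJI_of_path_of_strict_decay.
case=> rho [Krho HN].
have [has_in_edge|no_in_edge] := pselect (forall i, exists j, j \in Ii i).
- exact: (path_of_strict_decay_of_NJI i0 HG HSC Krho HN has_in_edge).
- exact: (path_of_strict_decay_no_in_edge HG HSC no_in_edge).
Qed.
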